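(* Let $A$ be an abelian group and $(A_i)_{i\in I}$ a family of subgroups such that the lattice of subgroups generated by the $A_i$ (under $+$ and $\cap$) is distributive. Let $B$ be one of the $A_i$ and $n$ a positive integer. If $$H^n\big((B\cap A_i)_{i\in I},A\big)=0\quad\text{and}\quad H^n\Big(\big((B+A_i)/B\big)_{i\in I},A/B\Big)=0,$$ then $H^n\big((A_i)_{i\in I},A\big)=0$.
   Context: For an abelian group $M$ and a family $(M_i)_{i\in I}$ of subgroups, $H^n((M_i),M)$ denotes the $n$-th cohomology of the cochain complex $C^n=\prod_{i_0,\dots,i_n\in I}M/(M_{i_0}+\cdots+M_{i_n})$ with differential $(df)(i_0,\dots,i_n)=\sum_{j=0}^n(-1)^j f(i_0,\dots,\widehat{i_j},\dots,i_n)\bmod M_{i_0}+\cdots+M_{i_n}$. A lattice is distributive if one (equivalently, each) of its operations distributes over the other. *)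

From mathcomp Require Import all_boot all_order all_algebra.
Set Implicit Arguments. Unset Strict Implicit. Unset Printing Implicit Defensive.
Import GRing.Theory.
Local Open Scope ring_scope.

Section Defs.
Variable G : zmodType.

Definition is_subgroup (S : G -> Prop) : Prop :=
  S 0 /\ forall x y, S x -> S y -> S (x - y).

Definition sub_add (S T : G -> Prop) : G -> Prop :=
  fun z => exists x y, S x /\ T y /\ z = x + y.
Definition sub_cap (S T : G -> Prop) : G -> Prop := fun z => S z /\ T z.

Variable I : Type.

Inductive gen_lattice (M : I -> G -> Prop) : (G -> Prop) -> Prop :=
  | gl_base i : gen_lattice M (M i)
  | gl_add S T : gen_lattice M S -> gen_lattice M T -> gen_lattice M (sub_add S T)
  | gl_cap S T : gen_lattice M S -> gen_lattice M T -> gen_lattice M (sub_cap S T).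

Definition distributive_family (M : I -> G -> Prop) : Prop :=
  forall S T U, gen_lattice M S -> gen_lattice M T -> gen_lattice M U ->
    forall x, sub_cap S (sub_add T U) x <-> sub_add (sub_cap S T) (sub_cap S U) x.

Definition sumsub (M : I -> G -> Prop) (m : nat) (i : 'I_m -> I) : G -> Prop :=
  fun z => exists x : 'I_m -> G, (forall j, M (i j) (x j)) /\ z = \sum_(j < m) x j.

(* Cochains of degree m-1 are represented by lifts
   f : ('I_m -> I) -> G of elements of prod_i G/(M_{i_0}+...+M_{i_{m-1}}).
   Differential (on representatives): *)
Definition cobound (m : nat) (f : ('I_m -> I) -> G) : ('I_m.+1 -> I) -> G :=
  fun i => \sum_(j < m.+1) (f (i \o lift j)) *~ ((-1) ^+ j).

Definition Hn_vanishes (M : I -> G -> Prop) (n : nat) : Prop :=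
  forall f : ('I_n.+1 -> I) -> G,
    (forall i : 'I_n.+2 -> I, sumsub M i (cobound f i)) ->
    exists g : ('I_n -> I) -> G,
      forall i : 'I_n.+1 -> I, sumsub M i (f i - cobound g i).

End Defs.

(* Lift a cocycle f of (A_i) to the quotient A/B, where H^n vanishes, so that
   f - d g takes values in B modulo the sums of the A_i. The B-valued
   correction h then has a coboundary d h lying both in B and in the sums of
   the A_i; distributivity puts it in the sums of the B ∩ A_i, and the
   vanishing of H^n((B ∩ A_i), A) absorbs h into a coboundary. *)
From HB Require Import structures.
From mathcomp Require Import all_boot all_order all_algebra.
From mathcomp Require Import ring zify.
From Stdlib Require Import FunctionalExtensionality IndefiniteDescription.
Import GRing.Theory.
Local Open Scope ring_scope.
Set Implicit Arguments. Unset Strict Implicit.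

(* The bijection between faces (j, l) with l < j and faces (l, j - 1) of the
   boundary of a simplex, along which the terms of d (d g) cancel. *)
Definition face_swap m (p : 'I_m.+2 * 'I_m.+1) : 'I_m.+2 * 'I_m.+1 :=
  if (p.2 < p.1)%N then (inord p.2, inord p.1.-1) else (inord p.2.+1, inord p.1).

Lemma face_swap_val m (p : 'I_m.+2 * 'I_m.+1) :
  (((face_swap p).1 : nat) = if (p.2 < p.1)%N then (p.2 : nat) else (p.2 : nat).+1) /\
  (((face_swap p).2 : nat) = if (p.2 < p.1)%N then (p.1 : nat).-1 else (p.1 : nat)).
Proof.
case: p => j l; rewrite /face_swap /=.
have := ltn_ord j; have := ltn_ord l => ? ?.
by case: (ltnP l j) => ? /=; rewrite !inordK //; lia.
Qed.

Lemma face_swapK m : involutive (@face_swap m).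
Proof.
case=> j l; have [e1 e2] := face_swap_val (face_swap (j, l)).
have [f1 f2] := face_swap_val (j, l); move: e1 e2 f1 f2 => /=.
set q := face_swap (j, l); case: (face_swap q) => x y /=.
case: q => u v /= ex ey eu ev.
by congr pair; apply: val_inj; rewrite /= ?ex ?ey eu ev;
  case: (ltnP l j) => ? /=; case: ifP => ?; lia.
Qed.

Lemma face_swap_lt m (p : 'I_m.+2 * 'I_m.+1) :
  ((face_swap p).2 < (face_swap p).1)%N = ~~ (p.2 < p.1)%N.
Proof. by have [-> ->] := face_swap_val p; case: ifP => ?; apply/idP/idP; lia. Qed.

Lemma bump_comm (l j x : nat) :
  (l < j)%N -> bump l (bump j.-1 x) = bump j (bump l x).
Proof. by rewrite /bump => ?; do ! case: leqP => ? /=; lia. Qed.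

Section Cobound.
Variables (G : zmodType) (I : Type).

Lemma eq_cobound m (f1 f2 : ('I_m -> I) -> G) i :
  (forall c, f1 c = f2 c) -> cobound f1 i = cobound f2 i.
Proof. by move=> e; apply: eq_bigr => j _; rewrite e. Qed.

Lemma coboundD m (f1 f2 : ('I_m -> I) -> G) i :
  cobound (fun c => f1 c + f2 c) i = cobound f1 i + cobound f2 i.
Proof. by rewrite /cobound -big_split; apply: eq_bigr => j _; rewrite mulrzDl. Qed.

Lemma coboundB m (f1 f2 : ('I_m -> I) -> G) i :
  cobound (fun c => f1 c - f2 c) i = cobound f1 i - cobound f2 i.
Proof. by rewrite /cobound -sumrB; apply: eq_bigr => j _; rewrite mulrzBl. Qed.

Lemma cobound_cobound m (g : ('I_m -> I) -> G) (i : 'I_m.+2 -> I) :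
  cobound (cobound g) i = 0.
Proof.
pose F (p : 'I_m.+2 * 'I_m.+1) :=
  g (fun x => i (lift p.1 (lift p.2 x))) *~ ((-1) ^+ p.1 * (-1) ^+ p.2).
have -> : cobound (cobound g) i = \sum_p F p.
  rewrite -(pair_bigA _ (fun j l => F (j, l))); apply: eq_bigr => j _.
  by rewrite mulrz_suml; apply: eq_bigr => l _; rewrite /F /= mulrzA_C.
rewrite (bigID (fun p : 'I_m.+2 * 'I_m.+1 => (p.2 < p.1)%N)) /=.
rewrite [X in _ + X](reindex_inj (can_inj (@face_swapK m))) /=.
under [X in _ + X]eq_bigl => p do rewrite face_swap_lt negbK.
rewrite -big_split /=; apply: big1 => -[j l] /= lt_lj.
have hl : (l < m.+2)%N by rewrite ltnW // ltnS ltn_ord.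
have hj : (j.-1 < m.+1)%N by have := ltn_ord j; lia.
rewrite /F /face_swap /= lt_lj /= !inordK //.
have -> : (fun x => i (lift (inord l) (lift (inord j.-1) x)))
        = (fun x : 'I_m => i (lift j (lift l x))).
  apply: functional_extensionality => x; congr i.
  by apply: val_inj; rewrite /= !inordK //; apply: bump_comm.
have j_gt0 : (0 < j)%N by lia.
rewrite -mulrzDr.
have -> : (-1) ^+ j * (-1) ^+ l + (-1) ^+ l * (-1) ^+ j.-1 = 0 :> int.
  by rewrite -{1}(prednK j_gt0) exprS; ring.
by rewrite mulr0z.
Qed.

Lemma raddf_cobound (Q : zmodType) (pi : {additive G -> Q}) m
    (g : ('I_m -> I) -> G) i :
  pi (cobound g i) = cobound (pi \o g) i.
Proof. by rewrite raddf_sum; apply: eq_bigr => j _; rewrite raddfMz. Qed.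

End Cobound.

Section Subgroup.
Variables (G : zmodType) (S : G -> Prop).
Hypothesis S_subgroup : is_subgroup S.

Lemma subgroup0 : S 0.
Proof. by case: S_subgroup. Qed.

Lemma subgroupB x y : S x -> S y -> S (x - y).
Proof. by case: S_subgroup => _; apply. Qed.

Lemma subgroupN x : S x -> S (- x).
Proof. by move=> Sx; rewrite -sub0r; apply: subgroupB => //; apply: subgroup0. Qed.

Lemma subgroupD x y : S x -> S y -> S (x + y).
Proof. by move=> Sx Sy; rewrite -[y]opprK; apply: subgroupB => //; apply: subgroupN. Qed.

Lemma subgroup_sum m (F : 'I_m -> G) : (forall j, S (F j)) -> S (\sum_(j < m) F j).
Proof. by move=> SF; apply: big_ind => //; [apply: subgroup0 | apply: subgroupD]. Qed.

Lemma subgroupMz x (z : int) : S x -> S (x *~ z).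
Proof.
move=> Sx; have Sxn n : S (x *+ n).
  elim: n => [|n IH]; first by rewrite mulr0n; apply: subgroup0.
  by rewrite mulrS; apply: subgroupD.
by case: z => n; rewrite ?NegzE ?mulrNz -pmulrn //; apply: subgroupN.
Qed.

Lemma cobound_subgroup (I : Type) m (h : ('I_m -> I) -> G) i :
  (forall c, S (h c)) -> S (cobound h i).
Proof. by move=> Sh; apply: subgroup_sum => j; apply: subgroupMz. Qed.

End Subgroup.

Lemma sumsub_cons (G : zmodType) (I : Type) (M : I -> G -> Prop) m (i : 'I_m.+1 -> I) x :
  sumsub M i x <->
  exists a t, M (i ord0) a /\ sumsub M (i \o lift ord0) t /\ x = a + t.
Proof.
split=> [[a [Ma ->]]|[a [t [Ma [[b [Mb ->]] ->]]]]].
  exists (a ord0), (\sum_(l < m) a (lift ord0 l)); rewrite big_ord_recl.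
  by split=> //; split=> //; exists (a \o lift ord0); split=> // l; apply: Ma.
exists (fun l => oapp b a (unlift ord0 l)); split.
  by move=> l; case: unliftP => [l' ->|->] /=; [apply: Mb|].
rewrite big_ord_recl /= unlift_none /=; congr (_ + _).
by apply: eq_bigr => l _; rewrite liftK.
Qed.

Section Sumsub.
Variables (G : zmodType) (I : Type) (M : I -> G -> Prop).
Hypothesis M_subgroup : forall i, is_subgroup (M i).

Lemma sumsub_subgroup m (i : 'I_m -> I) : is_subgroup (sumsub M i).
Proof.
split.
  by exists (fun _ => 0); rewrite big1 //; split=> // j; apply: subgroup0.
move=> _ _ [a [Ma ->]] [b [Mb ->]]; exists (fun j => a j - b j).
by rewrite sumrB; split => // j; apply: subgroupB.
Qed.

Lemma sumsub_face m (i : 'I_m.+1 -> I) j x :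
  sumsub M (i \o lift j) x -> sumsub M i x.
Proof.
move=> [a [Ma ->]]; exists (fun l => oapp a 0 (unlift j l)); split.
  by move=> l; case: unliftP => [l' ->|->] /=; [apply: Ma | apply: subgroup0].
rewrite (bigD1_ord j) //= unlift_none add0r.
by apply: eq_bigr => l _; rewrite liftK.
Qed.

Lemma cobound_sumsub m (s : ('I_m -> I) -> G) i :
  (forall c, sumsub M c (s c)) -> sumsub M i (cobound s i).
Proof.
move=> Ms; apply: subgroup_sum; first exact: sumsub_subgroup.
move=> j; apply: subgroupMz; first exact: sumsub_subgroup.
exact/(sumsub_face (j := j))/Ms.
Qed.

Lemma sumsub_in_lattice m (i : 'I_m.+1 -> I) :
  exists T, gen_lattice M T /\ forall x, T x <-> sumsub M i x.
Proof.
elim: m i => [|m IH] i.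
  exists (M (i ord0)); split=> [|x]; first exact: gl_base.
  split=> [Mx|[a [Ma ->]]]; last by rewrite big_ord1.
  by exists (fun _ => x); rewrite big_ord1; split=> // j; rewrite ord1.
have [T [latT T_sumsub]] := IH (i \o lift ord0).
exists (sub_add (M (i ord0)) T); split; first exact/gl_add/latT/gl_base.
move=> x; rewrite sumsub_cons.
by split=> -[a [t [Ma [Tt ->]]]]; exists a, t; do 2!split=> //; apply/T_sumsub.
Qed.

Lemma sumsub_cap k m (i : 'I_m.+1 -> I) x :
  distributive_family M ->
  M k x -> sumsub M i x -> sumsub (fun j => sub_cap (M k) (M j)) i x.
Proof.
have cap_subgroup j : is_subgroup (sub_cap (M k) (M j)).
  split=> [|y z [? ?] [? ?]]; first by split; apply: subgroup0.
  by split; apply: subgroupB.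
move=> distrM; elim: m i x => [|m IH] i x.
  move=> Mkx [a [Ma ex]]; exists a; split=> // j; rewrite ord1.
  by split=> //; rewrite ex big_ord1 in Mkx.
move=> Mkx /sumsub_cons [a [t [Ma [Mt ex]]]].
have [T [latT T_sumsub]] := sumsub_in_lattice (i \o lift ord0).
have [|a' [t' [[? ?] [[? Tt'] ->]]]] :=
  (distrM _ _ _ (gl_base _ k) (gl_base _ (i ord0)) latT x).1.
  by split=> //; exists a, t; rewrite T_sumsub.
apply/sumsub_cons => //; exists a', t'; split=> //; split=> //.
by apply: IH => //; rewrite -T_sumsub.
Qed.

End Sumsub.

Definition cocycle (G : zmodType) (I : Type) (M : I -> G -> Prop) m
    (f : ('I_m.+1 -> I) -> G) : Prop :=
  forall i : 'I_m.+2 -> I, sumsub M i (cobound f i).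

Definition quotient_family (A Q : zmodType) (I : Type) (pi : A -> Q)
    (B : A -> Prop) (M : I -> A -> Prop) : I -> Q -> Prop :=
  fun i q => exists x, sub_add B (M i) x /\ pi x = q.

Section Quotient.
Variables (A Q : zmodType) (I : Type) (M : I -> A -> Prop) (B : A -> Prop).
Variable pi : {additive A -> Q}.
Hypothesis pi_ker : forall x, pi x = 0 <-> B x.
Hypothesis pi_surj : forall q, exists x, pi x = q.

Local Notation QM := (quotient_family pi B M).

Lemma quotient_sumsub m (i : 'I_m -> I) x :
  sumsub M i x -> sumsub QM i (pi x).
Proof.
move=> [a [Ma ->]]; exists (pi \o a); rewrite raddf_sum; split=> // j.
by exists (a j); split=> //; exists 0, (a j); rewrite add0r -pi_ker raddf0.
Qed.

Lemma quotient_sumsub_lift m (i : 'I_m -> I) x :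
  sumsub QM i (pi x) -> exists b, B b /\ sumsub M i (x - b).
Proof.
move=> [y [QMy pix]].
have /functional_choice[ba Mba] : forall j, exists c : A * A,
    [/\ B c.1, M (i j) c.2 & pi (c.1 + c.2) = y j].
  by move=> j; have [_ [[b [a [Bb [Ma ->]]]] <-]] := QMy j; exists (b, a).
pose a := \sum_(j < m) (ba j).2.
exists (x - a); split; last first.
  by rewrite opprB addrC subrK; exists (fun j => (ba j).2); split=> // j; case: (Mba j).
apply/pi_ker; rewrite raddfB pix raddf_sum -sumrB big1 // => j _.
by case: (Mba j) => /pi_ker pib _ <-; rewrite raddfD pib add0r subrr.
Qed.

Lemma quotient_cocycle m (f : ('I_m.+1 -> I) -> A) :
  cocycle M f -> cocycle QM (pi \o f).
Proof. by move=> Mf i; rewrite -raddf_cobound; apply: quotient_sumsub. Qed.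

Lemma B_defect_of_quotient n (f : ('I_n.+1 -> I) -> A) :
  Hn_vanishes QM n -> cocycle M f ->
  exists g h, (forall c, B (h c)) /\
              forall c, sumsub M c (f c - cobound g c - h c).
Proof.
move=> HQ Mf; have [g' QMfg'] := HQ _ (quotient_cocycle Mf).
have [g pig] := functional_choice _ (fun c => pi_surj (g' c)).
have defect_mod_B c : exists b, B b /\ sumsub M c (f c - cobound g c - b).
  apply: quotient_sumsub_lift; rewrite raddfB raddf_cobound.
  by rewrite (eq_cobound _ pig); apply: QMfg'.
have [h Mh] := functional_choice _ defect_mod_B.
by exists g, h; split=> c; case: (Mh c).
Qed.

End Quotient.

Lemma cobounded_of_B_defect (A : zmodType) (I : Type) (M : I -> A -> Prop) k n
    (f : ('I_n.+1 -> I) -> A) g h :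
  (forall i, is_subgroup (M i)) -> distributive_family M ->
  Hn_vanishes (fun i => sub_cap (M k) (M i)) n ->
  cocycle M f -> (forall c, M k (h c)) ->
  (forall c, sumsub M c (f c - cobound g c - h c)) ->
  exists g', forall c, sumsub M c (f c - cobound g' c).
Proof.
move=> M_subgroup distrM Hcap Mf Bh M_defect.
have dh_cap : cocycle (fun i => sub_cap (M k) (M i)) h.
  move=> i; apply: sumsub_cap => //; first exact: cobound_subgroup.
  have -> : cobound h i = cobound f i - cobound (fun c => f c - cobound g c - h c) i.
    by rewrite !coboundB cobound_cobound subr0 subKr.
  by apply: subgroupB; [apply: sumsub_subgroup | apply: Mf | apply: cobound_sumsub].
have [g2 hg2] := Hcap _ dh_cap.
exists (fun c => g c + g2 c) => c; rewrite coboundD.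
rewrite (_ : f c - _ = (f c - cobound g c - h c) + (h c - cobound g2 c)); last first.
  by rewrite addrA subrK opprD addrA.
apply: subgroupD; first exact: sumsub_subgroup; first exact: M_defect.
by have [a [Ma ->]] := hg2 c; exists a; split=> // j; case: (Ma j).
Qed.

Theorem mainTheorem11 (A : zmodType) (I : Type) (Ai : I -> A -> Prop)
  (k : I) (n : nat)
  (Q : zmodType) (pi : A -> Q) :
  (forall i, is_subgroup (Ai i)) ->
  distributive_family Ai ->
  (0 < n)%N ->
  (* (Q, pi) is the quotient A/B, where B = Ai k *)
  (forall x y, pi (x - y) = pi x - pi y) ->
  (forall q, exists x, pi x = q) ->
  (forall x, pi x = 0 <-> Ai k x) ->
  Hn_vanishes (fun i => sub_cap (Ai k) (Ai i)) n ->
  Hn_vanishes (fun i q => exists x, sub_add (Ai k) (Ai i) x /\ pi x = q) n ->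
  Hn_vanishes Ai n.
Proof.
move=> Ai_subgroup distrAi _ piB pi_surj pi_ker Hcap Hquot f Ai_f.
pose piA : {additive A -> Q} := HB.pack pi (GRing.isZmodMorphism.Build A Q pi piB).
have [g [h [Bh defect]]] := B_defect_of_quotient (pi := piA) pi_ker pi_surj Hquot Ai_f.
exact: cobounded_of_B_defect Ai_subgroup distrAi Hcap Ai_f Bh defect.
Qed.
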